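(* Let $\Lambda$ be a set and let $(\mathfrak{S},\lambda,\parallel,\Gamma,\gamma)$ be a composition-order invariant $\Lambda$-system algebra such that $\Gamma(s)\supseteq\{\{i,i'\}\mid i,i'\in\lambda(s),\ i\neq i'\}$ for all $s\in\mathfrak{S}$. Let $s_0,s_1,r_1,r_2\in\mathfrak{S}$ be such that $\lambda(s_0),\lambda(s_1),\lambda(r_1),\lambda(r_2)$ are pairwise disjoint, and let $s_0^1,s_0^2\in\lambda(s_0)$, $s_1^1,s_1^2\in\lambda(s_1)$, $r_1^1,r_1^2\in\lambda(r_1)$, $r_2^1,r_2^2\in\lambda(r_2)$ be eight distinct interface labels. Define $\mathcal{S}_0:=\{\gamma_{r_1^2,e^2}(\gamma_{s_0^2,e^1}(\gamma_{s_0^1,r_1^1}(s_0\parallel r_1\parallel e)))\mid e\in\mathfrak{S},\ \lambda(e)\cap\lambda(s_0)=\emptyset=\lambda(e)\cap\lambda(r_1),\ e^1,e^2\in\lambda(e),\ e^1\neq e^2\}$, $\mathcal{S}_1:=\{\gamma_{e^2,r_2^2}(\gamma_{s_1^2,r_2^1}(\gamma_{s_1^1,e^1}(s_1\parallel e\parallel r_2)))\mid e\in\mathfrak{S},\ \lambda(e)\cap\lambda(s_1)=\emptyset=\lambda(e)\cap\lambda(r_2),\ e^1,e^2\in\lambda(e),\ e^1\neq e^2\}$, $\mathcal{S}_{=}:=\{\gamma_{r_1^2,r_2^2}(\gamma_{e^2,r_2^1}(\gamma_{e^1,r_1^1}(e\parallel r_1\parallel r_2)))\mid e\in\mathfrak{S},\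 \lambda(e)\cap\lambda(r_1)=\emptyset=\lambda(e)\cap\lambda(r_2),\ e^1,e^2\in\lambda(e),\ e^1\neq e^2\}$. Then $\mathcal{S}_0\cap\mathcal{S}_1\cap\mathcal{S}_{=}\neq\emptyset$.
   Context: A $\Lambda$-system algebra $(\mathfrak{S},\lambda,\parallel,\Gamma,\gamma)$ consists of a set $\mathfrak{S}$ (systems), a function $\lambda:\mathfrak{S}\to\mathcal{P}(\Lambda)$ with $\lambda(s)$ finite for all $s$, a partial binary operation $\parallel$ on $\mathfrak{S}$, a function $\Gamma$ assigning to each system $s$ a set $\Gamma(s)$ of unordered pairs $\{i,i'\}$ with $i,i'\in\lambda(s)$, and a partial function $\gamma$ mapping a pair $\{i,i'\}$ and a system $s$ to a system $\gamma_{i,i'}(s)$, such that: $s_1\parallel s_2$ is defined iff $\lambda(s_1)\cap\lambda(s_2)=\emptyset$, in which case $\lambda(s_1\parallel s_2)=\lambda(s_1)\cup\lambda(s_2)$ and for $j\in\{1,2\}$ and $i,i'\in\lambda(s_j)$ one has $\{i,i'\}\in\Gamma(s_1\parallel s_2)\iff\{i,i'\}\in\Gamma(s_j)$; and $\gamma_{i,i'}(s)$ is defined iff $\{i,i'\}\in\Gamma(s)$, in which case $\lambda(\gamma_{i,i'}(s))=\lambda(s)\setminus\{i,i'\}$. $\Gamma$ permits reordering if for all $s$, $\{i,i'\}\in\Gamma(s)$ and $\{j,j'\}\in\Gamma(\gamma_{i,i'}(s))$ we have $\{j,j'\}\in\Gamma(s)$ and $\{i,i'\}\in\Gamma(\gamma_{j,j'}(s))$.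 The algebra is connection-order invariant if $\Gamma$ permits reordering and moreover $\gamma_{j,j'}(\gamma_{i,i'}(s))=\gamma_{i,i'}(\gamma_{j,j'}(s))$ in that situation. It is composition-order invariant if it is connection-order invariant, $\parallel$ is associative and commutative (so parentheses in multiple parallel compositions are irrelevant), and for all $s_1,s_2$ with $\lambda(s_1)\cap\lambda(s_2)=\emptyset$ and $\{i,i'\}\in\Gamma(s_1)$ we have $\gamma_{i,i'}(s_1)\parallel s_2=\gamma_{i,i'}(s_1\parallel s_2)$. *)

From Stdlib Require Import List.
Import ListNotations.
Set Implicit Arguments.

Definition obind {A B : Type} (o : option A) (f : A -> option B) : option B :=
  match o with Some a => f a | None => None end.

(* A Lambda-system algebra (S, lambda, ||, Gamma, gamma) over the label set L.
   - [lam s i] : i belongs to lambda(s) (a finite subset of L);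
   - [par s1 s2] : the partial parallel composition (None = undefined);
   - [Gam s i i'] : the unordered pair {i,i'} belongs to Gamma(s)
     (symmetric relation, pairs of labels of s);
   - [gam i i' s] : gamma_{i,i'}(s) (None = undefined), symmetric in i,i'. *)
Record SysAlg (L : Type) := {
  sys :> Type;
  lam : sys -> L -> Prop;
  par : sys -> sys -> option sys;
  Gam : sys -> L -> L -> Prop;
  gam : L -> L -> sys -> option sys;
  lam_finite : forall s, exists l : list L, forall i, lam s i <-> In i l;
  Gam_sym : forall s i i', Gam s i i' -> Gam s i' i;
  Gam_labels : forall s i i', Gam s i i' -> lam s i /\ lam s i';
  gam_sym : forall i i' s, gam i i' s = gam i' i s;
  par_defined : forall s1 s2,
    (exists t, par s1 s2 = Some t) <-> (forall i, lam s1 i -> lam s2 i -> False);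
  par_lam : forall s1 s2 t, par s1 s2 = Some t ->
    forall i, lam t i <-> (lam s1 i \/ lam s2 i);
  par_Gam1 : forall s1 s2 t, par s1 s2 = Some t ->
    forall i i', lam s1 i -> lam s1 i' -> (Gam t i i' <-> Gam s1 i i');
  par_Gam2 : forall s1 s2 t, par s1 s2 = Some t ->
    forall i i', lam s2 i -> lam s2 i' -> (Gam t i i' <-> Gam s2 i i');
  gam_defined : forall i i' s,
    (exists t, gam i i' s = Some t) <-> Gam s i i';
  gam_lam : forall i i' s t, gam i i' s = Some t ->
    forall j, lam t j <-> (lam s j /\ j <> i /\ j <> i')
}.

Arguments lam {L A} _ _ : rename.
Arguments par {L A} _ _ : rename.
Arguments Gam {L A} _ _ _ : rename.
Arguments gam {L A} _ _ _ : rename.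

Section Props.
Variables (L : Type) (A : SysAlg L).

Definition permits_reordering : Prop :=
  forall (s t : A) i i' j j',
    Gam s i i' -> gam i i' s = Some t -> Gam t j j' ->
    Gam s j j' /\ (forall u, gam j j' s = Some u -> Gam u i i').

Definition connection_order_invariant : Prop :=
  permits_reordering /\
  forall (s t : A) i i' j j',
    Gam s i i' -> gam i i' s = Some t -> Gam t j j' ->
    obind (gam i i' s) (gam j j') = obind (gam j j' s) (gam i i').

Definition par_assoc : Prop :=
  forall a b c : A,
    obind (par a b) (fun ab => par ab c) = obind (par b c) (fun bc => par a bc).

Definition par_comm : Prop := forall a b : A, par a b = par b a.

Definition composition_order_invariant : Prop :=
  connection_order_invariant /\ par_assoc /\ par_comm /\
  forall (s1 s2 : A) i i',
    (forall j, lam s1 j -> lam s2 j -> False) -> Gam s1 i i' ->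
    obind (gam i i' s1) (fun t => par t s2) = obind (par s1 s2) (gam i i').

Definition disj (a b : A) : Prop := forall j, lam a j -> lam b j -> False.

(* s0 || r1 || e, associated to the left (irrelevant by associativity) *)
Definition par3 (a b c : A) : option A := obind (par a b) (fun ab => par ab c).

End Props.
Arguments disj {L A} _ _.
Arguments par3 {L A} _ _ _.
Arguments composition_order_invariant {L} A.
Arguments connection_order_invariant {L} A.

(* The common element is the closed system obtained from s0 || r1 || s1 || r2 by
   the four connections s0^1-r1^1, s0^2-s1^1, s1^2-r2^1, r1^2-r2^2.  For each of
   the three families, let e be one of the connections applied to the parallel
   composition of the two components that the family leaves free (s1 || r2,
   s0 || r1 and s0 || s1 respectively).  Since connections commute with parallel
   composition, the member of the family built from e is the whole composite
   with that connection done first, followed by the other three; and since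
   connections on distinct labels commute, the order in which the four
   connections are carried out does not matter. *)

From Stdlib Require Import List Permutation.
Import ListNotations.

Section Composition.
Context {L : Type} {A : SysAlg L}.

Lemma lam_gam {s t : A} {i i' j} :
  gam i i' s = Some t -> lam s j -> j <> i -> j <> i' -> lam t j.
Proof. intros H Hj Hi Hi'. apply (gam_lam A i i' s H j). auto. Qed.

Lemma disj_sym (a b : A) : disj a b -> disj b a.
Proof. intros H j Ha Hb. exact (H j Hb Ha). Qed.

Lemma disj_gam {s t c : A} {i i'} : gam i i' s = Some t -> disj s c -> disj t c.
Proof.
  intros H Hs j Hj Hc. apply (Hs j); [|exact Hc].
  apply (proj1 (gam_lam A i i' s H j) Hj).
Qed.

(* Parallel composition lifted to [option A], so that associativity and
   commutativity become plain rewrite rules. *)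
Definition opar (o1 o2 : option A) : option A :=
  obind o1 (fun a => obind o2 (par a)).

Lemma par3_opar (a b c : A) :
  par3 a b c = opar (opar (Some a) (Some b)) (Some c).
Proof. reflexivity. Qed.

Lemma opar_some {a b : A} : disj a b -> exists t, opar (Some a) (Some b) = Some t.
Proof. apply par_defined. Qed.

Lemma lam_oparl {a b t : A} {j} : opar (Some a) (Some b) = Some t -> lam a j -> lam t j.
Proof. intros H Hj. apply (par_lam A a b H j). auto. Qed.

Lemma lam_oparr {a b t : A} {j} : opar (Some a) (Some b) = Some t -> lam b j -> lam t j.
Proof. intros H Hj. apply (par_lam A a b H j). auto. Qed.

Lemma disj_opar {a b t c : A} :
  opar (Some a) (Some b) = Some t -> disj a c -> disj b c -> disj t c.
Proof.
  intros H Ha Hb j Hj Hc.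
  destruct (proj1 (par_lam A a b H j) Hj); eauto.
Qed.

Lemma opar_comm : par_comm A -> forall o1 o2, opar o1 o2 = opar o2 o1.
Proof. intros Hcomm [a|] [b|]; simpl; auto. Qed.

Lemma opar_assoc :
  par_assoc A -> forall o1 o2 o3, opar (opar o1 o2) o3 = opar o1 (opar o2 o3).
Proof.
  intros Hassoc [a|] [b|] [c|]; simpl; try reflexivity.
  - exact (Hassoc a b c).
  - destruct (par a b); reflexivity.
Qed.

Lemma opar_ACA :
  par_assoc A -> par_comm A ->
  forall o1 o2 o3 o4, opar (opar o1 o2) (opar o3 o4) = opar (opar o1 o3) (opar o2 o4).
Proof.
  intros Hassoc Hcomm o1 o2 o3 o4.
  rewrite !(opar_assoc Hassoc o1); f_equal.
  rewrite <- !(opar_assoc Hassoc), (opar_comm Hcomm o2 o3). reflexivity.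
Qed.

Definition par_gam_compat : Prop :=
  forall (s1 s2 : A) i i', disj s1 s2 -> Gam s1 i i' ->
    obind (gam i i' s1) (fun t => par t s2) = obind (par s1 s2) (gam i i').

Definition connect (l : list (L * L)) (o : option A) : option A :=
  fold_left (fun o c => obind o (gam (fst c) (snd c))) l o.

Definition ends (l : list (L * L)) : list L := flat_map (fun c => [fst c; snd c]) l.

Lemma ends_cons i i' l : ends ((i, i') :: l) = i :: i' :: ends l.
Proof. reflexivity. Qed.

Lemma connect_cons i i' l o :
  connect ((i, i') :: l) o = connect l (obind o (gam i i')).
Proof. reflexivity. Qed.

Lemma connect_None l : connect l None = None.
Proof. induction l as [|[i i'] l IH]; [reflexivity|]. rewrite connect_cons. exact IH. Qed.

Lemma lam_gam_ends {s t : A} {i i' l} :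
  gam i i' s = Some t -> (forall j, In j (i :: i' :: ends l) -> lam s j) ->
  NoDup (i :: i' :: ends l) -> forall j, In j (ends l) -> lam t j.
Proof.
  intros Ht Hlab Hnd j Hj.
  inversion_clear Hnd as [|? ? Hi Hnd']. inversion_clear Hnd' as [|? ? Hi' _].
  apply (lam_gam Ht); [apply Hlab; simpl; auto | intros -> .. ]; simpl in Hi; tauto.
Qed.

Lemma connect_flip i i' l o : connect ((i, i') :: l) o = connect ((i', i) :: l) o.
Proof. rewrite !connect_cons. destruct o as [s|]; simpl; [rewrite gam_sym|]; reflexivity. Qed.

End Composition.

Arguments par_gam_compat {L} A.

Section FullyConnectable.
Context {L : Type} {A : SysAlg L}.
Hypothesis HGam : forall (s : A) i i', lam s i -> lam s i' -> i <> i' -> Gam s i i'.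

Lemma gam_some {s : A} {i i'} : lam s i -> lam s i' -> i <> i' -> exists t, gam i i' s = Some t.
Proof. intros. apply gam_defined. auto. Qed.

Lemma opar_gam :
  par_gam_compat A ->
  forall {p e b : A} {i i'}, gam i i' p = Some e -> disj p b -> lam p i -> lam p i' -> i <> i' ->
    opar (Some e) (Some b) = obind (opar (Some p) (Some b)) (gam i i').
Proof.
  intros Hcompat p e b i i' He Hpb Hi Hi' Hii'.
  generalize (Hcompat p b i i' Hpb (HGam _ _ _ Hi Hi' Hii')). rewrite He. auto.
Qed.

Hypothesis Hco : connection_order_invariant A.

Lemma gam_comm (s : A) a b c d :
  lam s a -> lam s b -> lam s c -> lam s d -> NoDup [a; b; c; d] ->
  obind (gam a b s) (gam c d) = obind (gam c d s) (gam a b).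
Proof.
  intros ha hb hc hd nd.
  rewrite NoDup_cons_iff in nd; destruct nd as [na nd]; simpl in na.
  rewrite NoDup_cons_iff in nd; destruct nd as [nb nd]; simpl in nb.
  rewrite NoDup_cons_iff in nd; destruct nd as [nc _]; simpl in nc.
  assert (hab : a <> b) by (intros ->; tauto).
  destruct (gam_some ha hb hab) as [t Ht].
  destruct Hco as [_ Hswap].
  apply (Hswap s t a b c d (HGam _ _ _ ha hb hab) Ht).
  apply HGam; [apply (lam_gam Ht) .. |]; try assumption; intros ->; tauto.
Qed.

Lemma connect_defined l : forall s : A,
  (forall j, In j (ends l) -> lam s j) -> NoDup (ends l) ->
  exists t, connect l (Some s) = Some t.
Proof.
  induction l as [|[i i'] l IH]; intros s Hlab Hnd; [exists s; reflexivity|].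
  rewrite ends_cons in Hlab, Hnd.
  destruct (gam_some (s := s) (i := i) (i' := i')) as [t Ht].
  - apply Hlab; simpl; auto.
  - apply Hlab; simpl; auto.
  - intros ->. inversion Hnd as [|? ? Hn]. simpl in Hn. tauto.
  - rewrite connect_cons; cbn [obind]; rewrite Ht.
    apply IH; [exact (lam_gam_ends Ht Hlab Hnd) | exact (NoDup_app_remove_l [i; i'] _ Hnd)].
Qed.

Lemma connect_perm {l l'} : Permutation l l' -> forall s : A,
  (forall j, In j (ends l) -> lam s j) -> NoDup (ends l) ->
  connect l (Some s) = connect l' (Some s).
Proof.
  induction 1 as [|[i i'] l l' _ IH|[a b] [c d] l|l l' l'' P1 IH1 _ IH2];
    intros s Hlab Hnd; rewrite ?ends_cons in Hlab, Hnd.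
  - reflexivity.
  - rewrite !connect_cons; cbn [obind].
    destruct (gam i i' s) as [t|] eqn:Ht; [|rewrite !connect_None; reflexivity].
    apply IH; [exact (lam_gam_ends Ht Hlab Hnd) | exact (NoDup_app_remove_l [i; i'] _ Hnd)].
  - rewrite !connect_cons; cbn [obind]. f_equal.
    apply gam_comm; [apply Hlab; simpl; tauto .. |].
    apply NoDup_app_remove_r with (l' := ends l). exact Hnd.
  - assert (Pends : Permutation (ends l) (ends l')) by (apply Permutation_flat_map; exact P1).
    rewrite (IH1 s Hlab Hnd). apply IH2.
    + intros j Hj. apply Hlab. apply Permutation_in with (ends l'); [symmetry|]; assumption.
    + apply (Permutation_NoDup Pends Hnd).
Qed.

End FullyConnectable.

Section CommonElement.
Context {L : Type} {A : SysAlg L}.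
Hypothesis HGam : forall (s : A) i i', lam s i -> lam s i' -> i <> i' -> Gam s i i'.
Hypotheses (Hco : connection_order_invariant A) (Hassoc : par_assoc A)
  (Hcomm : par_comm A) (Hcompat : par_gam_compat A).
Variables s0 s1 r1 r2 : A.
Hypotheses (d01 : disj s0 s1) (d0r1 : disj s0 r1) (d0r2 : disj s0 r2)
  (d1r1 : disj s1 r1) (d1r2 : disj s1 r2) (dr1r2 : disj r1 r2).
Variables s01 s02 s11 s12 r11 r12 r21 r22 : L.
Hypotheses (h01 : lam s0 s01) (h02 : lam s0 s02) (h11 : lam s1 s11) (h12 : lam s1 s12)
  (hr11 : lam r1 r11) (hr12 : lam r1 r12) (hr21 : lam r2 r21) (hr22 : lam r2 r22).
Hypothesis hdist : NoDup [s01; s02; s11; s12; r11; r12; r21; r22].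

Ltac nodup_contradiction :=
  repeat match goal with H : NoDup (_ :: _) |- _ => inversion_clear H end;
  simpl in *; tauto.

Ltac distinct := let E := fresh in intro E; subst; nodup_contradiction.

Ltac label := eauto using lam_oparl, lam_oparr.

Definition whole : option A := opar (opar (Some s0) (Some r1)) (opar (Some s1) (Some r2)).

Definition wiring : list (L * L) := [(s01, r11); (s02, s11); (s12, r21); (r12, r22)].

Definition wired : option A := connect wiring whole.

Lemma wiring_ends_NoDup : NoDup (ends wiring).
Proof.
  unfold wiring, ends; simpl.
  repeat constructor; simpl; intuition (subst; nodup_contradiction).
Qed.

Lemma whole_defined : exists W, whole = Some W /\ forall j, In j (ends wiring) -> lam W j.
Proof.
  destruct (opar_some d0r1) as [q0 Hq0].
  destruct (opar_some d1r2) as [p Hp].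
  assert (dq0p : disj q0 p)
    by (apply (disj_opar Hq0); apply disj_sym, (disj_opar Hp); auto using disj_sym).
  destruct (opar_some dq0p) as [W HW].
  exists W. split; [unfold whole; rewrite Hq0, Hp; exact HW|].
  intros j Hj. simpl in Hj. intuition (subst; label).
Qed.

Lemma wired_perm l : Permutation wiring l -> connect l whole = wired.
Proof.
  intros P. unfold wired. destruct whole_defined as [W [-> Hlab]].
  symmetry. apply (connect_perm HGam Hco P _ Hlab wiring_ends_NoDup).
Qed.

Lemma wired_defined : exists x, wired = Some x.
Proof.
  unfold wired. destruct whole_defined as [W [-> Hlab]].
  apply (connect_defined HGam _ _ Hlab wiring_ends_NoDup).
Qed.

Lemma wired_in_S0 : exists (e : A) (e1 e2 : L),
  disj e s0 /\ disj e r1 /\ lam e e1 /\ lam e e2 /\ e1 <> e2 /\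
  connect [(s01, r11); (s02, e1); (r12, e2)] (par3 s0 r1 e) = wired.
Proof.
  destruct (opar_some d0r1) as [q0 Hq0].
  destruct (opar_some d1r2) as [p Hp].
  destruct (gam_some HGam (s := p) (i := s12) (i' := r21)) as [e He];
    [label | label | distinct |].
  assert (dp0 : disj p s0) by (apply (disj_opar Hp); auto using disj_sym).
  assert (dpr1 : disj p r1) by (apply (disj_opar Hp); auto using disj_sym).
  assert (dpq0 : disj p q0) by (apply disj_sym, (disj_opar Hq0); auto using disj_sym).
  exists e, s11, r22. repeat split.
  - exact (disj_gam He dp0).
  - exact (disj_gam He dpr1).
  - apply (lam_gam He); [label | distinct | distinct].
  - apply (lam_gam He); [label | distinct | distinct].
  - distinct.
  - rewrite par3_opar, (opar_comm Hcomm _ (Some e)), Hq0.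
    rewrite (opar_gam HGam Hcompat He dpq0 ltac:(label) ltac:(label) ltac:(distinct)).
    rewrite <- Hp, <- Hq0, (opar_comm Hcomm (opar _ _)), <- connect_cons.
    apply wired_perm. symmetry. apply (Permutation_middle [_; _] [_]).
Qed.

Lemma wired_in_S1 : exists (e : A) (e1 e2 : L),
  disj e s1 /\ disj e r2 /\ lam e e1 /\ lam e e2 /\ e1 <> e2 /\
  connect [(s11, e1); (s12, r21); (e2, r22)] (par3 s1 e r2) = wired.
Proof.
  destruct (opar_some d0r1) as [q0 Hq0].
  destruct (opar_some d1r2) as [p Hp].
  destruct (gam_some HGam (s := q0) (i := s01) (i' := r11)) as [e He];
    [label | label | distinct |].
  assert (dq1 : disj q0 s1) by (apply (disj_opar Hq0); auto using disj_sym).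
  assert (dq2 : disj q0 r2) by (apply (disj_opar Hq0); auto using disj_sym).
  assert (dq0p : disj q0 p) by (apply disj_sym, (disj_opar Hp); auto using disj_sym).
  exists e, s02, r12. repeat split.
  - exact (disj_gam He dq1).
  - exact (disj_gam He dq2).
  - apply (lam_gam He); [label | distinct | distinct].
  - apply (lam_gam He); [label | distinct | distinct].
  - distinct.
  - rewrite connect_flip, par3_opar, (opar_comm Hcomm (Some s1)), (opar_assoc Hassoc), Hp.
    rewrite (opar_gam HGam Hcompat He dq0p ltac:(label) ltac:(label) ltac:(distinct)).
    rewrite <- Hp, <- Hq0, <- connect_cons. reflexivity.
Qed.

Lemma wired_in_Seq : exists (e : A) (e1 e2 : L),
  disj e r1 /\ disj e r2 /\ lam e e1 /\ lam e e2 /\ e1 <> e2 /\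
  connect [(e1, r11); (e2, r21); (r12, r22)] (par3 e r1 r2) = wired.
Proof.
  destruct (opar_some d01) as [m Hm].
  destruct (opar_some dr1r2) as [r Hr].
  destruct (gam_some HGam (s := m) (i := s02) (i' := s11)) as [e He];
    [label | label | distinct |].
  assert (dm1 : disj m r1) by (apply (disj_opar Hm); auto using disj_sym).
  assert (dm2 : disj m r2) by (apply (disj_opar Hm); auto using disj_sym).
  assert (dmr : disj m r) by (apply disj_sym, (disj_opar Hr); auto using disj_sym).
  exists e, s01, s12. repeat split.
  - exact (disj_gam He dm1).
  - exact (disj_gam He dm2).
  - apply (lam_gam He); [label | distinct | distinct].
  - apply (lam_gam He); [label | distinct | distinct].
  - distinct.
  - rewrite par3_opar, (opar_assoc Hassoc), Hr.
    rewrite (opar_gam HGam Hcompat He dmr ltac:(label) ltac:(label) ltac:(distinct)).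
    rewrite <- Hm, <- Hr, (opar_ACA Hassoc Hcomm), <- connect_cons.
    apply wired_perm. apply perm_swap.
Qed.

End CommonElement.

Theorem theorem3p3 (L : Type) (A : SysAlg L)
  (HA : composition_order_invariant A)
  (HGam : forall (s : A) i i', lam s i -> lam s i' -> i <> i' -> Gam s i i')
  (s0 s1 r1 r2 : A)
  (d01 : disj s0 s1) (d0r1 : disj s0 r1) (d0r2 : disj s0 r2)
  (d1r1 : disj s1 r1) (d1r2 : disj s1 r2) (dr1r2 : disj r1 r2)
  (s01 s02 s11 s12 r11 r12 r21 r22 : L)
  (h01 : lam s0 s01) (h02 : lam s0 s02) (h11 : lam s1 s11) (h12 : lam s1 s12)
  (hr11 : lam r1 r11) (hr12 : lam r1 r12) (hr21 : lam r2 r21) (hr22 : lam r2 r22)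
  (hdist : NoDup [s01; s02; s11; s12; r11; r12; r21; r22]) :
  exists x : A,
    (exists (e : A) (e1 e2 : L), disj e s0 /\ disj e r1 /\
       lam e e1 /\ lam e e2 /\ e1 <> e2 /\
       obind (obind (obind (par3 s0 r1 e) (gam s01 r11)) (gam s02 e1)) (gam r12 e2)
         = Some x) /\
    (exists (e : A) (e1 e2 : L), disj e s1 /\ disj e r2 /\
       lam e e1 /\ lam e e2 /\ e1 <> e2 /\
       obind (obind (obind (par3 s1 e r2) (gam s11 e1)) (gam s12 r21)) (gam e2 r22)
         = Some x) /\
    (exists (e : A) (e1 e2 : L), disj e r1 /\ disj e r2 /\
       lam e e1 /\ lam e e2 /\ e1 <> e2 /\
       obind (obind (obind (par3 e r1 r2) (gam e1 r11)) (gam e2 r21)) (gam r12 r22)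
         = Some x).
Proof.
  destruct HA as (Hco & Hassoc & Hcomm & Hcompat).
  destruct (wired_defined HGam _ _ _ _ d01 d0r1 d0r2 d1r1 d1r2 dr1r2 _ _ _ _ _ _ _ _
              h01 h02 h11 h12 hr11 hr12 hr21 hr22 hdist) as [x Hx].
  exists x. rewrite <- Hx.
  split; [|split];
    [eapply wired_in_S0 | eapply wired_in_S1 | eapply wired_in_Seq]; eassumption.
Qed.
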